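(* Let $\Omega=\{1,\ldots,n\}$, $k\in\Omega$, and let $\phi$ be a generalized metric satisfying convexity: for all distributions $p_1,p_2,q_1,q_2$ on a common finite set and $\lambda\in[0,1]$, $\phi(\lambda p_1+(1-\lambda)p_2\|\lambda q_1+(1-\lambda)q_2)\le\lambda\phi(p_1\|q_1)+(1-\lambda)\phi(p_2\|q_2)$. Then for all $\Omega$-point distributions $p_1,p_2,q_1,q_2$ and $\lambda\in[0,1]$, $\widehat{\phi}_k(\lambda p_1+(1-\lambda)p_2\|\lambda q_1+(1-\lambda)q_2)\le\lambda\widehat{\phi}_k(p_1\|q_1)+(1-\lambda)\widehat{\phi}_k(p_2\|q_2)$.
   Context: An $\Omega$-point distribution is a probability vector on $\Omega$. $\phi$ assigns a real number $\phi(p\|q)$ to each pair of probability distributions on the same finite set. $\mathcal P_k(\Omega)$ is the set of partitions of $\Omega$ into exactly $k$ nonempty disjoint cells; for $\rho\in\mathcal P_k(\Omega)$, $\widehat p_\rho(a)=\sum_{i\in a}p(i)$ for $a\in\rho$. The Sketch $\star$-metric is $\widehat{\phi}_k(p\|q)=\max_{\rho\in\mathcal P_k(\Omega)}\phi(\widehat p_\rho\|\widehat q_\rho)$. *)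

From mathcomp Require Import all_boot all_order all_algebra.
From mathcomp Require Import reals.
Set Implicit Arguments. Unset Strict Implicit. Unset Printing Implicit Defensive.
Import Order.TTheory GRing.Theory Num.Theory.
Local Open Scope ring_scope.

Section Defs.
Variable R : realType.

Definition is_dist (T : finType) (p : T -> R) : Prop :=
  (forall x, 0 <= p x) /\ \sum_(x : T) p x = 1.

Definition mix (T : finType) (l : R) (p1 p2 : T -> R) : T -> R :=
  fun x => l * p1 x + (1 - l) * p2 x.

(** a "generalized metric": a real number phi T p q for each pair of
    distributions p q on a common finite set T (values on non-distributions
    are irrelevant). *)
Definition gen_metric := forall T : finType, (T -> R) -> (T -> R) -> R.

Definition convex_metric (phi : gen_metric) : Prop :=
  forall (T : finType) (p1 p2 q1 q2 : T -> R) (l : R),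
    is_dist p1 -> is_dist p2 -> is_dist q1 -> is_dist q2 ->
    0 <= l <= 1 ->
    phi T (mix l p1 p2) (mix l q1 q2) <= l * phi T p1 q1 + (1 - l) * phi T p2 q2.

Definition partitions_k (n k : nat) : {set {set {set 'I_n}}} :=
  [set rho : {set {set 'I_n}} | partition rho [set: 'I_n] && (#|rho| == k)].

Definition cell (n : nat) (rho : {set {set 'I_n}}) : finType :=
  {A : {set 'I_n} | A \in rho}.

Definition coarse (n : nat) (rho : {set {set 'I_n}}) (p : 'I_n -> R) :
  cell rho -> R := fun a => \sum_(i in val a) p i.

Definition sketch (phi : gen_metric) (n k : nat) (p q : 'I_n -> R) : R :=
  let s := [seq phi (@cell n rho) (@coarse n rho p) (@coarse n rho q)
           | rho <- enum (partitions_k n k)] in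
  \big[Num.max/head 0 s]_(x <- s) x.

End Defs.

(* For each fixed partition rho, coarsening is linear and maps distributions
   to distributions, so convexity of phi holds partition by partition; a
   maximum of functions each bounded by the matching convex combination is
   bounded by the convex combination of the maxima. *)
From mathcomp Require Import all_boot all_order all_algebra.
From mathcomp Require Import reals.
From mathcomp Require Import boolp.
Set Implicit Arguments. Unset Strict Implicit. Unset Printing Implicit Defensive.
Import Order.TTheory GRing.Theory Num.Theory.
Local Open Scope ring_scope.

Section SeqMax.
Variable R : realType.

Definition seqmax (s : seq R) : R := \big[Num.max/head 0 s]_(x <- s) x.

Lemma le_seqmax (s : seq R) (x : R) : x \in s -> x <= seqmax s.
Proof. by move=> xs; exact: le_bigmax_seq. Qed.

(* No nonemptiness hypothesis is needed: for [r] empty both sides are [0].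
   This is why [lemma6] never uses [1 <= k <= n]. *)
Lemma seqmax_map_mix_le (I : eqType) (r : seq I) (f g h : I -> R) (l : R) :
    0 <= l <= 1 -> {in r, forall i, f i <= l * g i + (1 - l) * h i} ->
  seqmax (map f r) <= l * seqmax (map g r) + (1 - l) * seqmax (map h r).
Proof.
case/andP=> l_ge0 l_le1 fgh.
have l'_ge0 : 0 <= 1 - l by rewrite subr_ge0.
case: r fgh => [|i0 r] fgh; first by rewrite /seqmax !big_nil !mulr0 addr0.
have f_le i : i \in i0 :: r ->
    f i <= l * seqmax (map g (i0 :: r)) + (1 - l) * seqmax (map h (i0 :: r)).
  move=> ir; apply: le_trans (fgh i ir) _.
  by apply: lerD; apply: ler_wpM2l => //; apply: le_seqmax; apply: map_f.
rewrite /seqmax big_map big_seq; apply: bigmax_le => [|i ir]; last exact: f_le.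
exact/f_le/mem_head.
Qed.

End SeqMax.

Section Coarsening.
Variables (R : realType) (n : nat) (rho : {set {set 'I_n}}).

Lemma coarse_dist (p : 'I_n -> R) :
  partition rho [set: 'I_n] -> is_dist p -> is_dist (@coarse _ _ rho p).
Proof.
move=> /and3P[/eqP cover_rho triv_rho _] [p_ge0 sum_p]; split.
  by move=> a; apply: sumr_ge0 => i _; apply: p_ge0.
rewrite /coarse -(big_sub (fun A => A \in rho) (fun A => \sum_(i in A) p i)).
rewrite -(big_trivIset _ triv_rho) cover_rho -sum_p.
by apply: eq_bigl => i; rewrite in_setT.
Qed.

Lemma coarse_mix (l : R) (p1 p2 : 'I_n -> R) :
  @coarse _ _ rho (mix l p1 p2) = mix l (@coarse _ _ rho p1) (@coarse _ _ rho p2).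
Proof.
by apply: funext => a; rewrite /coarse /mix big_split -!mulr_sumr.
Qed.

Lemma convex_metric_coarse (phi : gen_metric R) (p1 p2 q1 q2 : 'I_n -> R) (l : R) :
    partition rho [set: 'I_n] -> convex_metric phi ->
    is_dist p1 -> is_dist p2 -> is_dist q1 -> is_dist q2 -> 0 <= l <= 1 ->
  phi (cell rho) (coarse (mix l p1 p2)) (coarse (mix l q1 q2))
    <= l * phi (cell rho) (coarse p1) (coarse q1)
       + (1 - l) * phi (cell rho) (coarse p2) (coarse q2).
Proof.
move=> rho_part phi_conv dp1 dp2 dq1 dq2 l01; rewrite !coarse_mix.
by apply: phi_conv => //; apply: coarse_dist.
Qed.

End Coarsening.

Lemma sketchE (R : realType) (phi : gen_metric R) (n k : nat) (p q : 'I_n -> R) :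
  sketch phi k p q
    = seqmax [seq phi (cell rho) (coarse p) (coarse q) | rho <- enum (partitions_k n k)].
Proof. by []. Qed.

Theorem lemma6 (R : realType) (phi : gen_metric R) (n k : nat) :
  (1 <= k <= n)%N ->
  convex_metric phi ->
  forall (p1 p2 q1 q2 : 'I_n -> R) (l : R),
    is_dist p1 -> is_dist p2 -> is_dist q1 -> is_dist q2 ->
    0 <= l <= 1 ->
    sketch phi k (mix l p1 p2) (mix l q1 q2)
      <= l * sketch phi k p1 q1 + (1 - l) * sketch phi k p2 q2.
Proof.
move=> _ phi_conv p1 p2 q1 q2 l dp1 dp2 dq1 dq2 l01.
rewrite !sketchE; apply: (seqmax_map_mix_le l01) => rho.
rewrite mem_enum inE => /andP[rho_part _].
exact: convex_metric_coarse.
Qed.
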